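(* Let $(A,\circ,[\cdot,\cdot])$ be a dual pre-Poisson algebra. There is a compatible pre-dual pre-Poisson algebra structure on $(A,\circ,[\cdot,\cdot])$ if and only if there exists an invertible $\mathcal{O}$-operator on $(A,\circ,[\cdot,\cdot])$ (associated to some representation).
   Context: Field $\mathbb{F}$ of characteristic $0$. A dual pre-Poisson algebra $(A,\circ,[\cdot,\cdot])$: $x\circ(y\circ z)=(x\circ y)\circ z=(y\circ x)\circ z$; $[x,[y,z]]=[[x,y],z]+[y,[x,z]]$; $[x,y\circ z]=[x,y]\circ z+y\circ[x,z]$; $[x\circ y,z]=x\circ[y,z]+y\circ[x,z]$; $[x,y]\circ z=-[y,x]\circ z$. A representation of it is $(V;l_\circ,r_\circ,l_{[\cdot,\cdot]},r_{[\cdot,\cdot]})$, with $V$ a vector space and linear maps $A\to\mathrm{End}(V)$ satisfying, for all $x,y\in A$: $r_\circ(x)r_\circ(y)=r_\circ(y\circ x)=l_\circ(y)r_\circ(x)=r_\circ(x)l_\circ(y)$; $l_\circ(x\circ y)=l_\circ(x)l_\circ(y)=l_\circ(y)l_\circ(x)$; $l_{[\cdot,\cdot]}([x,y])=l_{[\cdot,\cdot]}(x)l_{[\cdot,\cdot]}(y)-l_{[\cdot,\cdot]}(y)l_{[\cdot,\cdot]}(x)$; $r_{[\cdot,\cdot]}([x,y])=r_{[\cdot,\cdot]}(y)r_{[\cdot,\cdot]}(x)+l_{[\cdot,\cdot]}(x)r_{[\cdot,\cdot]}(y)$; $r_{[\cdot,\cdot]}(x)r_{[\cdot,\cdot]}(y)=-r_{[\cdot,\cdot]}(x)l_{[\cdot,\cdot]}(y)$;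 $r_{[\cdot,\cdot]}(x\circ y)=r_\circ(y)r_{[\cdot,\cdot]}(x)+l_\circ(x)r_{[\cdot,\cdot]}(y)$; $l_{[\cdot,\cdot]}(x)r_\circ(y)=r_\circ(y)l_{[\cdot,\cdot]}(x)+r_\circ([x,y])$; $l_{[\cdot,\cdot]}(x)l_\circ(y)=l_\circ([x,y])+l_\circ(y)l_{[\cdot,\cdot]}(x)$; $r_{[\cdot,\cdot]}(x)r_\circ(y)=r_\circ([y,x])+l_\circ(y)r_{[\cdot,\cdot]}(x)$; $l_{[\cdot,\cdot]}(x\circ y)=l_\circ(x)l_{[\cdot,\cdot]}(y)+l_\circ(y)l_{[\cdot,\cdot]}(x)$; $r_{[\cdot,\cdot]}(x)(l_\circ-r_\circ)(y)=0$; $r_\circ(x)(l_{[\cdot,\cdot]}+r_{[\cdot,\cdot]})(y)=0$; $l_\circ([x,y]+[y,x])=0$. An $\mathcal{O}$-operator on $(A,\circ,[\cdot,\cdot])$ associated to such a representation is a linear map $T:V\to A$ with $T(u)\circ T(v)=T(l_\circ(T(u))v+r_\circ(T(v))u)$ and $[T(u),T(v)]=T(l_{[\cdot,\cdot]}(T(u))v+r_{[\cdot,\cdot]}(T(v))u)$ for all $u,v\in V$. A pre-dual pre-Poisson algebra is a vector space with bilinear operations $\rhd,\lhd,\succ,\prec$ satisfying for all $x,y,z$: $x\lhd(y\lhd z+y\rhd z)=(x\lhd y)\lhd z=(y\rhd x)\lhd z=y\rhd(x\lhd z)$; $x\rhd(y\rhd z)=(x\lhd y+x\rhd y)\rhd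 z=(y\lhd x+y\rhd x)\rhd z$; $(x\prec y+x\succ y)\succ z=x\succ(y\succ z)-y\succ(x\succ z)$; $(x\succ y)\prec z=-(y\prec x)\prec z$; $x\prec(y\prec z+y\succ z)=(x\prec y)\prec z+y\succ(x\prec z)$; $x\prec(y\rhd z+y\lhd z)=(x\prec y)\lhd z+y\rhd(x\prec z)$; $x\succ(y\lhd z)=(x\succ y)\lhd z+y\lhd(x\succ z+x\prec z)$; $x\succ(y\rhd z)=(x\succ y+x\prec y)\rhd z+y\rhd(x\succ z)$; $(x\lhd y)\prec z=x\lhd(y\succ z+y\prec z)+y\rhd(x\prec z)$; $(x\rhd y+x\lhd y)\succ z=x\rhd(y\succ z)+y\rhd(x\succ z)$; $(x\rhd y-y\lhd x)\prec z=0$; $(x\succ y+y\prec x)\lhd z=0$; $(x\succ y+x\prec y+y\succ x+y\prec x)\rhd z=0$. A compatible pre-dual pre-Poisson algebra structure on $(A,\circ,[\cdot,\cdot])$ is a pre-dual pre-Poisson algebra $(A,\rhd,\lhd,\succ,\prec)$ on the same space with $x\circ y=x\rhd y+x\lhd y$ and $[x,y]=x\succ y+x\prec y$ for all $x,y$. *)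

From HB Require Import structures.
From mathcomp Require Import all_boot all_order all_algebra.
Set Implicit Arguments. Unset Strict Implicit. Unset Printing Implicit Defensive.
Import GRing.Theory.
Local Open Scope ring_scope.

Definition is_bilinear (F : fieldType) (U V W : lmodType F) (f : U -> V -> W) : Prop :=
  (forall x (a : F) y1 y2, f x (a *: y1 + y2) = a *: f x y1 + f x y2) /\
  (forall y (a : F) x1 x2, f (a *: x1 + x2) y = a *: f x1 y + f x2 y).

Definition is_linear_map (F : fieldType) (U W : lmodType F) (f : U -> W) : Prop :=
  forall (a : F) u1 u2, f (a *: u1 + u2) = a *: f u1 + f u2.

Definition is_dual_prePoisson (F : fieldType) (A : lmodType F)
    (circ br : A -> A -> A) : Prop :=
  is_bilinear circ /\ is_bilinear br /\
  forall x y z,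
    (circ x (circ y z) = circ (circ x y) z /\
        circ (circ x y) z = circ (circ y x) z /\
        br x (br y z) = br (br x y) z + br y (br x z) /\
        br x (circ y z) = circ (br x y) z + circ y (br x z) /\
        br (circ x y) z = circ x (br y z) + circ y (br x z)
      /\ circ (br x y) z = - circ (br y x) z).

(* Representation (V; lc, rc, lb, rb) of (A, circ, br); the maps A -> End(V)
   are linear, i.e. (x, v) |-> l(x) v is bilinear.  Equalities of
   endomorphisms are stated pointwise in v. *)
Definition is_dpp_representation (F : fieldType) (A : lmodType F)
    (circ br : A -> A -> A) (V : lmodType F)
    (lc rc lb rb : A -> V -> V) : Prop :=
  is_bilinear lc /\ is_bilinear rc /\ is_bilinear lb /\ is_bilinear rb /\
  forall x y (v : V),
    ((rc x (rc y v) = rc (circ y x) v /\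
            rc (circ y x) v = lc y (rc x v) /\
            lc y (rc x v) = rc x (lc y v) /\
            lc (circ x y) v = lc x (lc y v) /\
            lc x (lc y v) = lc y (lc x v) /\
            lb (br x y) v = lb x (lb y v) - lb y (lb x v)
          /\ rb (br x y) v = rb y (rb x v) + lb x (rb y v)) /\
        (rb x (rb y v) = - rb x (lb y v) /\
            rb (circ x y) v = rc y (rb x v) + lc x (rb y v) /\
            lb x (rc y v) = rc y (lb x v) + rc (br x y) v /\
            lb x (lc y v) = lc (br x y) v + lc y (lb x v) /\
            rb x (rc y v) = rc (br y x) v + lc y (rb x v)
          /\ lb (circ x y) v = lc x (lb y v) + lc y (lb x v)) /\
        rb x (lc y v - rc y v) = 0 /\
        rc x (lb y v + rb y v) = 0
      /\ lc (br x y + br y x) v = 0).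

Definition is_O_operator (F : fieldType) (A : lmodType F)
    (circ br : A -> A -> A) (V : lmodType F)
    (lc rc lb rb : A -> V -> V) (T : V -> A) : Prop :=
  is_linear_map T /\
  forall u v : V,
    circ (T u) (T v) = T (lc (T u) v + rc (T v) u) /\
    br (T u) (T v) = T (lb (T u) v + rb (T v) u).

Definition is_pre_dual_prePoisson (F : fieldType) (A : lmodType F)
    (rhd lhd succ prec : A -> A -> A) : Prop :=
  is_bilinear rhd /\ is_bilinear lhd /\ is_bilinear succ /\ is_bilinear prec /\
  forall x y z,
    ((lhd x (lhd y z + rhd y z) = lhd (lhd x y) z /\
            lhd (lhd x y) z = lhd (rhd y x) z /\
            lhd (rhd y x) z = rhd y (lhd x z) /\
            rhd x (rhd y z) = rhd (lhd x y + rhd x y) z /\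
            rhd (lhd x y + rhd x y) z = rhd (lhd y x + rhd y x) z /\
            succ (prec x y + succ x y) z = succ x (succ y z) - succ y (succ x z)
          /\ prec (succ x y) z = - prec (prec y x) z) /\
        (prec x (prec y z + succ y z) = prec (prec x y) z + succ y (prec x z) /\
            prec x (rhd y z + lhd y z) = lhd (prec x y) z + rhd y (prec x z) /\
            succ x (lhd y z) = lhd (succ x y) z + lhd y (succ x z + prec x z) /\
            succ x (rhd y z) = rhd (succ x y + prec x y) z + rhd y (succ x z) /\
            prec (lhd x y) z = lhd x (succ y z + prec y z) + rhd y (prec x z)
          /\ succ (rhd x y + lhd x y) z = rhd x (succ y z) + rhd y (succ x z)) /\
        prec (rhd x y - lhd y x) z = 0 /\
        lhd (succ x y + prec y x) z = 0
      /\ rhd (succ x y + prec x y + succ y x + prec y x) z = 0).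

Definition has_compatible_pre_dual_prePoisson (F : fieldType) (A : lmodType F)
    (circ br : A -> A -> A) : Prop :=
  exists rhd lhd succ prec : A -> A -> A,
    is_pre_dual_prePoisson rhd lhd succ prec /\
    forall x y, circ x y = rhd x y + lhd x y /\ br x y = succ x y + prec x y.

From HB Require Import structures.
From mathcomp Require Import all_boot all_order all_algebra.
Set Implicit Arguments. Unset Strict Implicit. Unset Printing Implicit Defensive.
Import GRing.Theory.
Local Open Scope ring_scope.

(* The axioms of a pre-dual pre-Poisson algebra (A, ▷, ◁, ≻, ≺) say exactly that
   (A; ▷, ◁^op, ≻, ≺^op) is a representation of (A, ▷ + ◁, ≻ + ≺); the identity is
   then an invertible O-operator.  Conversely, an invertible O-operator T : V -> A
   lets one transport the representation V to A along T; the O-operator identities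
   say that the transported actions split ∘ and [·,·], so A is again of the
   regular form above. *)

Section LinearMap.

Variables (F : fieldType) (U W : lmodType F) (f : U -> W).
Hypothesis f_lin : is_linear_map f.

Lemma linear_mapD u v : f (u + v) = f u + f v.
Proof. by have := f_lin 1 u v; rewrite !scale1r. Qed.

Lemma linear_map0 : f 0 = 0.
Proof. by apply: (addrI (f 0)); rewrite -linear_mapD !addr0. Qed.

Lemma linear_mapZ a u : f (a *: u) = a *: f u.
Proof. by rewrite -[a *: u]addr0 f_lin linear_map0 addr0. Qed.

Lemma linear_mapN u : f (- u) = - f u.
Proof. by rewrite -scaleN1r linear_mapZ scaleN1r. Qed.

Lemma linear_map_inverse (g : W -> U) :
  cancel f g -> cancel g f -> is_linear_map g.
Proof.
by move=> fK gK a w1 w2; apply: (can_inj fK); rewrite f_lin !gK.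
Qed.

End LinearMap.

Lemma is_bilinear_swap (F : fieldType) (U V W : lmodType F) (f : U -> V -> W) :
  is_bilinear f -> is_bilinear (fun v u => f u v).
Proof. by case=> f_linr f_linl; split=> *; [apply: f_linl | apply: f_linr]. Qed.

Section RegularRepresentation.

Variables (F : fieldType) (A : lmodType F) (circ br rhd lhd succ prec : A -> A -> A).
Hypothesis splitting :
  forall x y, circ x y = rhd x y + lhd x y /\ br x y = succ x y + prec x y.

Let circE x y : circ x y = rhd x y + lhd x y. Proof. by case: (splitting x y). Qed.
Let brE x y : br x y = succ x y + prec x y. Proof. by case: (splitting x y). Qed.

Lemma regular_representation_of_pre_dual_prePoisson :
  is_pre_dual_prePoisson rhd lhd succ prec ->
  is_dpp_representation circ br rhd (fun x v => lhd v x) succ (fun x v => prec v x).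
Proof.
case=> rhd_bil [lhd_bil [succ_bil [prec_bil Ax]]].
do 2 (split=> //; split; first exact: is_bilinear_swap).
move=> x y v /=; do ![split].
- by have [[a1 _] _] := Ax v y x; rewrite circE addrC a1.
- by have [[a1 [a2 [a3 _]]] _] := Ax v y x; rewrite circE addrC a1 a2 a3.
- by have [[_ [_ [a3 _]]] _] := Ax v y x; rewrite a3.
- by have [[_ [_ [_ [a4 _]]]] _] := Ax x y v; rewrite circE addrC a4.
- have [[_ [_ [_ [a4 [a5 _]]]]] _] := Ax x y v.
  have [[_ [_ [_ [a4' _]]]] _] := Ax y x v.
  by rewrite a4 a5 a4'.
- by have [[_ [_ [_ [_ [_ [a6 _]]]]]] _] := Ax x y v; rewrite brE addrC a6.
- by have [_ [[b1 _] _]] := Ax v x y; rewrite brE addrC b1.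
- by have [[_ [_ [_ [_ [_ [_ a7]]]]]] _] := Ax y v x; rewrite a7 opprK.
- by have [_ [[_ [b2 _]] _]] := Ax v x y; rewrite circE b2.
- by have [_ [[_ [_ [b3 _]]] _]] := Ax x v y; rewrite brE b3.
- by have [_ [[_ [_ [_ [b4 _]]]] _]] := Ax x y v; rewrite brE b4.
- by have [_ [[_ [_ [_ [_ [b5 _]]]]] _]] := Ax v y x; rewrite brE b5.
- by have [_ [[_ [_ [_ [_ [_ b6]]]]] _]] := Ax x y v; rewrite circE b6.
- by have [_ [_ [c1 _]]] := Ax y v x.
- by have [_ [_ [_ [c2 _]]]] := Ax y v x.
- by have [_ [_ [_ [_ c3]]]] := Ax x y v; rewrite !brE addrA.
Qed.

Lemma pre_dual_prePoisson_of_regular_representation :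
  is_dpp_representation circ br rhd (fun x v => lhd v x) succ (fun x v => prec v x) ->
  is_pre_dual_prePoisson rhd lhd succ prec.
Proof.
case=> rhd_bil [lhd_bil [succ_bil [prec_bil R]]].
do 4 (split; first by [apply: is_bilinear_swap | ]).
move=> x y z; do ![split].
- by have [[r1 _] _] := R z y x; rewrite addrC -circE r1.
- by have [[r1 [r2 [r3 _]]] _] := R z y x; rewrite r1 r2 r3.
- by have [[_ [_ [r3 _]]] _] := R z y x; rewrite r3.
- by have [[_ [_ [_ [r4 _]]]] _] := R x y z; rewrite (addrC (lhd _ _)) -circE r4.
- have [[_ [_ [_ [r4 [r5 _]]]]] _] := R x y z.
  have [[_ [_ [_ [r4' _]]]] _] := R y x z.
  by rewrite !(addrC (lhd _ _)) -!circE r4 r5 r4'.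
- by have [[_ [_ [_ [_ [_ [r6 _]]]]]] _] := R x y z; rewrite addrC -brE r6.
- by have [_ [[q1 _] _]] := R z x y; rewrite q1 opprK.
- by have [[_ [_ [_ [_ [_ [_ r7]]]]]] _] := R y z x; rewrite addrC -brE r7.
- by have [_ [[_ [q2 _]] _]] := R y z x; rewrite -circE q2.
- by have [_ [[_ [_ [q3 _]]] _]] := R x z y; rewrite -brE q3.
- by have [_ [[_ [_ [_ [q4 _]]]] _]] := R x y z; rewrite -brE q4.
- by have [_ [[_ [_ [_ [_ [q5 _]]]]] _]] := R z y x; rewrite -brE q5.
- by have [_ [[_ [_ [_ [_ [_ q6]]]]] _]] := R x y z; rewrite -circE q6.
- by have [_ [_ [c1 _]]] := R z x y.
- by have [_ [_ [_ [c2 _]]]] := R z x y.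
- by have [_ [_ [_ [_ c3]]]] := R x y z; rewrite -addrA -!brE.
Qed.

Lemma id_is_O_operator_regular :
  is_O_operator circ br rhd (fun x v => lhd v x) succ (fun x v => prec v x) id.
Proof. by split=> // u v; rewrite circE brE. Qed.

End RegularRepresentation.

Definition conj_action (F : fieldType) (A V W : lmodType F)
    (T : V -> W) (S : W -> V) (f : A -> V -> V) : A -> W -> W :=
  fun x w => T (f x (S w)).

Section ConjugateRepresentation.

Variables (F : fieldType) (A V W : lmodType F) (T : V -> W) (S : W -> V).
Hypotheses (T_lin : is_linear_map T) (TK : cancel T S) (SK : cancel S T).

Let S_lin : is_linear_map S := linear_map_inverse T_lin TK SK.

Lemma is_bilinear_conj_action (f : A -> V -> V) :
  is_bilinear f -> is_bilinear (conj_action T S f).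
Proof.
case=> f_linr f_linl; rewrite /conj_action.
by split=> *; [rewrite S_lin f_linr T_lin | rewrite f_linl T_lin].
Qed.

Lemma dpp_representation_conj (circ br : A -> A -> A) (lc rc lb rb : A -> V -> V) :
  is_dpp_representation circ br lc rc lb rb ->
  is_dpp_representation circ br (conj_action T S lc) (conj_action T S rc)
    (conj_action T S lb) (conj_action T S rb).
Proof.
case=> lc_bil [rc_bil [lb_bil [rb_bil R]]].
do 4 (split; first exact: is_bilinear_conj_action).
move=> x y w; rewrite /conj_action -!(linear_mapN T_lin) -!(linear_mapD T_lin) !TK.
rewrite -!(linear_map0 T_lin).
(* Each transported identity is now [T] applied to the original one at [S w]. *)
have [[? [? [? [? [? [? ?]]]]]] [[? [? [? [? [? ?]]]]] [? [? ?]]]] := R x y (S w).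
by do ![split]; congr T.
Qed.

End ConjugateRepresentation.

Lemma O_operator_conj_split (F : fieldType) (A V : lmodType F)
    (circ br : A -> A -> A) (lc rc lb rb : A -> V -> V) (T : V -> A) (S : A -> V) :
  is_O_operator circ br lc rc lb rb T -> cancel S T ->
  forall x y,
    circ x y = conj_action T S lc x y + conj_action T S rc y x /\
    br x y = conj_action T S lb x y + conj_action T S rb y x.
Proof.
case=> T_lin HO SK x y; have [circTT brTT] := HO (S x) (S y).
by rewrite !SK in circTT brTT; rewrite circTT brTT !(linear_mapD T_lin).
Qed.

Theorem theorem3p29 (F : fieldType) (charF0 : [pchar F] =i pred0)
    (A : lmodType F) (circ br : A -> A -> A) :
  is_dual_prePoisson circ br ->
  (has_compatible_pre_dual_prePoisson circ br <->
   exists (V : lmodType F) (lc rc lb rb : A -> V -> V) (T : V -> A),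
     is_dpp_representation circ br lc rc lb rb /\
     is_O_operator circ br lc rc lb rb T /\ bijective T).
Proof.
move=> _; split.
- case=> [rhd [lhd [succ [prec [pdpp splitting]]]]].
  exists A, rhd, (fun x v => lhd v x), succ, (fun x v => prec v x), id.
  split; first exact: regular_representation_of_pre_dual_prePoisson.
  by split; [exact: id_is_O_operator_regular | exists id].
- case=> [V [lc [rc [lb [rb [T [rep [O_T [S TK SK]]]]]]]]].
  have splitting := O_operator_conj_split O_T SK.
  exists (conj_action T S lc), (fun x y => conj_action T S rc y x),
    (conj_action T S lb), (fun x y => conj_action T S rb y x).
  split=> //; apply: pre_dual_prePoisson_of_regular_representation splitting _.
  exact: (dpp_representation_conj O_T.1 TK SK rep).
Qed.
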